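(* Let $k\ge2$ and let $L$ be a subspace of $\bigwedge^{k}V$ such that $e_{1}\wedge e_{2}\wedge\bigwedge^{k-2}V\subseteq L$ and $e_1\wedge e_2\wedge x=0$ for all $x\in L$. Suppose $N_{j\to i}L=L$ for all $i<j$ with $i,j\geq3$. Then there are pairwise linearly independent vectors $w_{1},\dots,w_{m}$ in the span of $e_{1},e_{2}$ and subspaces $K_{1},\dots,K_{m}$ of $\bigwedge^{k-1}V^{(\{1,2\})}$ such that \[ L=e_{1}\wedge e_{2}\wedge\bigwedge^{k-2}V+\sum_{i=1}^m w_{i}\wedge K_{i}, \] and moreover: (1) for all distinct $i,j\in[m]$, $K_{i}\cap K_{j}=\bigcap_{h=1}^m K_{h}$; (2) each $K_{i}$, as well as $\bigcap_{h}K_{h}$, has a basis of monomials whose variable sets form a shifted set system (with respect to $\{3,\dots,n\}$).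
   Context: $\mathbb{F}$ is a field (assumed throughout the paper, for expository purposes, to have characteristic not $2$), $V$ is an $n$-dimensional $\mathbb{F}$-vector space with a fixed basis $e_1,\dots,e_n$, and $\bigwedge V$ its exterior algebra; for $S=\{s_1<\cdots<s_r\}\subseteq[n]$, the monomial $e_S=e_{s_1}\wedge\cdots\wedge e_{s_r}$ has variable set $S$. For $J\subseteq[n]$, $V^{(J)}$ is the span of $\{e_h:h\notin J\}$, $V^{(j)}=V^{(\{j\})}$, and $\bigwedge V^{(J)}$ is viewed as a subalgebra of $\bigwedge V$. Slow shift: for distinct $i,j\in[n]$ and nonzero $m\in\bigwedge^kV$, write uniquely $m=x+e_j\wedge y$ with $x\in\bigwedge^kV^{(j)}$, $y\in\bigwedge^{k-1}V^{(j)}$, and set $N_{j\to i}m=x+e_i\wedge y$ if this is nonzero, and $N_{j\to i}m=e_j\wedge y$ otherwise (the limit as $t\to0$ of the projective action of the linear map $e_j\mapsto e_i+te_j$ fixing the other $e_h$). For a subspace $L$, $N_{j\to i}L$ is the span of $\{N_{j\to i}m:m\in L\setminus\{0\}\}$. A family $\mathcal{F}$ of subsets of $\{3,\dots,n\}$ is shifted (with respect to $\{3,\dots,n\}$) if for all $3\le i<j$ and every $F\in\mathcal{F}$ with $j\in F$, $i\notin F$, also $(F\setminus\{j\})\cup\{i\}\in\mathcal{F}$. *)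

From HB Require Import structures.
From mathcomp Require Import all_boot all_order all_algebra.
Set Implicit Arguments. Unset Strict Implicit. Unset Printing Implicit Defensive.
Import Order.TTheory GRing.Theory Num.Theory.
Local Open Scope ring_scope.

(* Exterior algebra of V = F^d with basis e_0, ..., e_(d-1) (0-indexed: the
   paper's e_1, e_2 are our e_0, e_1, and the paper's {3,...,n} is our
   {i | 2 <= i}).  An element of /\V is its coefficient function on the
   monomials e_S, S : {set 'I_d}. *)
Section Exterior.
Variables (F : fieldType) (d : nat).

Definition ext := {ffun {set 'I_d} -> F^o}.

Definition mono (S : {set 'I_d}) : ext := [ffun T => (T == S)%:R].

(* e_S /\ e_T = (-1)^#{(s,t) in S x T | t < s} e_(S u T) if S, T disjoint, else 0 *)
Definition wsign (S T : {set 'I_d}) : F :=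
  (-1) ^+ #|[set p : 'I_d * 'I_d | (p.1 \in S) && (p.2 \in T) && (p.2 < p.1)%N]|.

Definition wmono (S T : {set 'I_d}) : ext :=
  if [disjoint S & T] then wsign S T *: mono (S :|: T) else 0.

Definition wedge (u v : ext) : ext :=
  \sum_(S : {set 'I_d}) \sum_(T : {set 'I_d}) (u S * v T) *: wmono S T.

Definition evec (h : 'I_d) : ext := mono [set h].

Definition homog (k : nat) (v : ext) : Prop := forall S : {set 'I_d}, #|S| != k -> v S = 0.

Definition Lam (k : nat) : {vspace ext} :=
  <<[seq mono X | X <- enum [set X : {set 'I_d} | #|X| == k]]>>%VS.

Definition LamAvoid (J : {set 'I_d}) (k : nat) : {vspace ext} :=
  <<[seq mono X | X <- enum [set X : {set 'I_d} | (#|X| == k) && [disjoint X & J]]]>>%VS.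

Definition wedge_sp (w : ext) (K : {vspace ext}) : {vspace ext} :=
  <<[seq wedge w x | x <- vbasis K]>>%VS.

(* Slow shift N_{j -> i}: write m = x + e_j /\ y with x, y free of e_j;
   N m = x + e_i /\ y if nonzero, else e_j /\ y. *)
Definition shift_x (j : 'I_d) (m : ext) : ext :=
  [ffun X : {set 'I_d} => if j \in X then 0 else m X].
Definition shift_y (j : 'I_d) (m : ext) : ext :=
  [ffun X : {set 'I_d} => if j \in X then 0 else wsign [set j] X * m (j |: X)].
Definition slow_shift (j i : 'I_d) (m : ext) : ext :=
  let z := shift_x j m + wedge (evec i) (shift_y j m) in
  if z != 0 then z else wedge (evec j) (shift_y j m).

Definition in_shift_span (j i : 'I_d) (L : {vspace ext}) (v : ext) : Prop :=
  exists s : seq ext, (forall m, m \in s -> (m \in L) && (m != 0)) /\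
                      v \in <<map (slow_shift j i) s>>%VS.

Definition shift_fixed (j i : 'I_d) (L : {vspace ext}) : Prop :=
  forall v, in_shift_span j i L v <-> v \in L.

Definition shifted (Fam : {set {set 'I_d}}) : Prop :=
  (forall S, S \in Fam -> forall h : 'I_d, h \in S -> (2 <= h)%N) /\
  (forall S, S \in Fam -> forall i j : 'I_d, (2 <= i)%N -> (i < j)%N ->
     j \in S -> i \notin S -> S :\ j :|: [set i] \in Fam).

Definition shifted_monomial_basis (U : {vspace ext}) : Prop :=
  exists Fam : {set {set 'I_d}},
    basis_of U [seq mono X | X <- enum Fam] /\ shifted Fam.

End Exterior.

From HB Require Import structures.
From mathcomp Require Import all_boot all_order all_algebra.
From mathcomp Require Import ring.
Set Implicit Arguments. Unset Strict Implicit. Unset Printing Implicit Defensive.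
Import GRing.Theory.
Local Open Scope ring_scope.

(* Since L is fixed by the slow shifts N_{j->i} (2 <= i < j), it is stable under
   the projections onto the monomials that do or do not contain e_j, for every
   j > 2.  Together with E12 <= L and the vanishing on L of every coordinate
   avoiding both e_0 and e_1, this splits each element of L into a part in E12
   plus, for each (k-1)-set S avoiding 0 and 1, a component (a e_0 + b e_1) /\ e_S
   that lies in L.  Normalising the direction [a : b] leaves finitely many
   pairwise independent vectors w, and K_w is spanned by the e_S with
   w /\ e_S in L.  If w /\ e_S and w' /\ e_S are in L for two directions, then
   so are e_0 /\ e_S and e_1 /\ e_S, which gives the common pairwise
   intersection; and N_{j->i} sends w /\ e_S to a nonzero multiple of
   w /\ e_(S - j + i), so every family of such S is shifted. *)

Section FinsetFacts.
Variable T : finType.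
Implicit Types (a : T) (A S X : {set T}).

Lemma eq_setU1 a S X : a \notin S -> (X == a |: S) = (a \in X) && (S == X :\ a).
Proof.
move=> aS; apply/eqP/andP => [->|[aX /eqP->]]; last by rewrite setD1K.
by rewrite setU11 setU1K.
Qed.

Lemma disjoint_setD A X : [disjoint A & X :\: A].
Proof. by rewrite disjoints_subset setDE setCI setCK subsetUr. Qed.

Lemma setUDK A X : A \subset X -> A :|: X :\: A = X.
Proof. by move=> AX; rewrite setDE setUIr setUCr setIT (setUidPr AX). Qed.

End FinsetFacts.

Section Monomials.
Variables (F : fieldType) (d : nat).
Local Notation ext := (ext F d).
Implicit Types (v : ext) (X Y : {set 'I_d}) (Fam : {set {set 'I_d}}).

Definition monos Fam : seq ext := [seq mono F X | X <- enum Fam].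

Lemma monoE X Y : mono F X Y = (Y == X)%:R.
Proof. by rewrite ffunE. Qed.

Lemma ext_monoE v : v = \sum_Y v Y *: mono F Y.
Proof.
apply/ffunP => X; rewrite sum_ffunE (bigD1 X) //= big1 => [|Y nYX].
  by rewrite addr0 ffunE monoE eqxx; exact: (esym (mulr1 _)).
by rewrite ffunE monoE eq_sym (negbTE nYX); exact: mulr0.
Qed.

Lemma mem_monos Fam X : X \in Fam -> mono F X \in <<monos Fam>>%VS.
Proof. by move=> XF; apply/memv_span/map_f; rewrite mem_enum. Qed.

Lemma span_monosP Fam v :
  reflect (forall Y, Y \notin Fam -> v Y = 0) (v \in <<monos Fam>>%VS).
Proof.
apply: (iffP idP) => [/coord_span -> Y nY | vF].
  rewrite sum_ffunE big1 // => i _; rewrite ffunE (nth_map set0) -?cardE //.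
  rewrite monoE; case: eqP => [YX|_]; last exact: mulr0.
  by move: nY; rewrite YX -tnth_nth -mem_enum mem_tnth.
rewrite [v]ext_monoE; apply: memv_suml => Y _.
by have [/mem_monos/memvZ//|/vF->] := boolP (Y \in Fam); rewrite scale0r mem0v.
Qed.

Lemma span_monosS Fam1 Fam2 :
  Fam1 \subset Fam2 -> (<<monos Fam1>> <= <<monos Fam2>>)%VS.
Proof.
move=> /subsetP sub12; apply/subvP => v /span_monosP v1; apply/span_monosP => Y nY.
by apply: v1; apply: contra nY; apply: sub12.
Qed.

Lemma span_monosI Fam1 Fam2 :
  (<<monos Fam1>> :&: <<monos Fam2>> = <<monos (Fam1 :&: Fam2)>>)%VS.
Proof.
apply/vspaceP => v; rewrite memv_cap.
apply/andP/span_monosP => [[/span_monosP v1 /span_monosP v2] Y|v12].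
  by rewrite inE negb_and => /orP[/v1|/v2].
by split; apply/span_monosP => Y nY; apply: v12; rewrite inE negb_and nY ?orbT.
Qed.

Lemma free_monos Fam : free (monos Fam).
Proof.
apply/freeP => c c0 i; move/(congr1 (fun v : ext => v (nth set0 (enum Fam) i))): c0.
rewrite sum_ffunE ffunE (bigD1 i) //= big1 => [|j nji].
  rewrite (nth_map set0) -?cardE // ffunE monoE eqxx addr0 => <-.
  exact: (esym (mulr1 _)).
rewrite ffunE (nth_map set0) -?cardE // ffunE (nth_uniq _ _ _ (enum_uniq _)) -?cardE //.
rewrite (inj_eq val_inj) eq_sym (negbTE nji); exact: mulr0.
Qed.

Lemma basis_monos Fam : basis_of <<monos Fam>> (monos Fam).
Proof. by rewrite /basis_of eqxx free_monos. Qed.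

Definition projP (P : pred {set 'I_d}) v : ext := [ffun X => if P X then v X else 0].

Lemma projPE P v X : projP P v X = if P X then v X else 0.
Proof. by rewrite ffunE. Qed.

Lemma projP_comp P Q v : projP P (projP Q v) = projP [pred X | P X && Q X] v.
Proof. by apply/ffunP => X; rewrite !projPE /=; case: (P X). Qed.

Lemma shifted_setI Fam1 Fam2 :
  shifted Fam1 -> shifted Fam2 -> shifted (Fam1 :&: Fam2).
Proof.
move=> [ge1 sh1] [ge2 sh2]; split=> [S /setIP[/ge1]//|S /setIP[S1 S2] i j i2 ij jS iS].
by rewrite inE (sh1 _ S1 _ _ i2 ij jS iS) (sh2 _ S2 _ _ i2 ij jS iS).
Qed.

End Monomials.

Section Wedge.
Variables (F : fieldType) (d : nat).
Local Notation ext := (ext F d).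
Implicit Types (u v : ext) (A B R S T X Y : {set 'I_d}) (h : 'I_d).

Lemma wsign_neq0 A B : wsign F A B != 0.
Proof. by rewrite expf_neq0 // oppr_eq0 oner_eq0. Qed.

Lemma wsignK A B (x : F) : wsign F A B * (wsign F A B * x) = x.
Proof. by rewrite mulrA -exprMn mulrNN mulr1 expr1n mul1r. Qed.

Fact wedge_is_linear u : linear (wedge u).
Proof.
move=> a v1 v2; rewrite /wedge scaler_sumr -big_split; apply: eq_bigr => S _ /=.
rewrite scaler_sumr -big_split; apply: eq_bigr => T _ /=.
by rewrite !ffunE mulrDr scalerDl scalerA mulrCA.
Qed.

HB.instance Definition _ u :=
  GRing.isLinear.Build F ext ext *:%R (wedge u) (wedge_is_linear u).

Lemma wedgeDl u1 u2 v : wedge (u1 + u2) v = wedge u1 v + wedge u2 v.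
Proof.
rewrite /wedge -big_split; apply: eq_bigr => S _ /=.
by rewrite -big_split; apply: eq_bigr => T _ /=; rewrite ffunE mulrDl scalerDl.
Qed.

Lemma wedgeZl a u v : wedge (a *: u) v = a *: wedge u v.
Proof.
rewrite /wedge scaler_sumr; apply: eq_bigr => S _ /=.
by rewrite scaler_sumr; apply: eq_bigr => T _ /=; rewrite ffunE scalerA mulrA.
Qed.

Lemma wedge_mono A B : wedge (mono F A) (mono F B) = wmono F A B.
Proof.
rewrite /wedge (bigD1 A) //= [X in _ + X]big1 => [|S nSA]; last first.
  by apply: big1 => T _; rewrite monoE (negbTE nSA) mul0r scale0r.
rewrite addr0 (bigD1 B) //= [X in _ + X]big1 => [|T nTB]; last first.
  by rewrite !monoE (negbTE nTB) mulr0 scale0r.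
by rewrite addr0 !monoE !eqxx mulr1 scale1r.
Qed.

Lemma wedge_spE u (U : {vspace ext}) : wedge_sp u U = (linfun (wedge u) @: U)%VS.
Proof.
rewrite -[in RHS](span_basis (vbasisP U)) limg_span; congr <<_>>%VS.
by apply: eq_map => x; rewrite lfunE.
Qed.

Lemma memv_wedge_sp u (U : {vspace ext}) x : x \in U -> wedge u x \in wedge_sp u U.
Proof. by move=> xU; rewrite wedge_spE -lfunE memv_img. Qed.

Lemma wedge_sp_span u (s : seq ext) : wedge_sp u <<s>> = <<map (wedge u) s>>%VS.
Proof.
by rewrite wedge_spE limg_span; congr <<_>>%VS; apply: eq_map => x; rewrite lfunE.
Qed.

Lemma wedge_monoE A v X : wedge (mono F A) v X =
  if A \subset X then wsign F A (X :\: A) * v (X :\: A) else 0.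
Proof.
rewrite /wedge (bigD1 A) //= [X in _ + X]big1 => [|S nSA]; last first.
  by apply: big1 => T _; rewrite ffunE (negbTE nSA) mul0r scale0r.
rewrite addr0 sum_ffunE; under eq_bigr => T _ do rewrite !ffunE eqxx mul1r /wmono.
case: ifP => AX; last first.
  apply: big1 => T _; case: ifP => _; rewrite ffunE ?scaler0 //.
  rewrite ffunE; case: eqP => [XE|_]; last by rewrite !scaler0.
  by rewrite XE subsetUl in AX.
rewrite (bigD1 (X :\: A)) //= [X in _ + X]big1 => [|T nT]; last first.
  case: ifP => dAT; rewrite ffunE ?scaler0 //.
  rewrite ffunE; case: eqP => [XE|_]; last by rewrite !scaler0.
  by case/eqP: nT; rewrite XE setDUl setDv set0U; apply/esym/setDidPl; rewrite disjoint_sym.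
rewrite disjoint_setD setUDK // ffunE [mono _ _ _]ffunE eqxx addr0 mulrC.
exact: (congr1 _ (mulr1 _)).
Qed.

Lemma wsign1_setU1 h (o : 'I_d) R :
  (o < h)%N -> o \notin R -> wsign F [set h] (o |: R) = - wsign F [set h] R.
Proof.
move=> oh oR; rewrite /wsign -[RHS]mulN1r -exprS; congr (_ ^+ _).
set P := [set p | _ && (p.2 \in R) && _].
transitivity #|(h, o) |: P|; last by rewrite cardsU1 inE /= (negbTE oR) andbF.
apply: eq_card => -[p1 p2]; rewrite !inE /= xpair_eqE.
by case: (eqVneq p1 h) => [->|] //=; case: (eqVneq p2 o) => [->|] //=; rewrite oh.
Qed.

Lemma wsign1_gt h R : {in R, forall t : 'I_d, (h < t)%N} -> wsign F [set h] R = 1.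
Proof.
move=> hR; rewrite /wsign (_ : [set p | _] = set0) ?cards0 //.
apply/setP => -[p1 p2]; rewrite !inE /=.
case: (eqVneq p1 h) => [->|] //=; case: (boolP (p2 \in R)) => //= /hR hp2.
by apply/negbTE; rewrite -leqNgt ltnW.
Qed.

Lemma wedge_evec_mono h S :
  h \notin S -> wedge (evec F h) (mono F S) = wsign F [set h] S *: mono F (h |: S).
Proof. by move=> hS; rewrite /evec wedge_mono /wmono disjoints1 hS. Qed.

Lemma wedge_evecE h v X : wedge (evec F h) v X =
  if h \in X then wsign F [set h] (X :\ h) * v (X :\ h) else 0.
Proof. by rewrite /evec wedge_monoE sub1set. Qed.

Lemma wedge_evec_monoU1 h (o : 'I_d) R : (o < h)%N -> o \notin R -> h \notin R ->
  wedge (evec F h) (mono F (o |: R)) = - wsign F [set h] R *: mono F (o |: (h |: R)).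
Proof.
move=> oh oR hR; have hoR : h \notin o |: R.
  by rewrite !inE negb_or hR andbT; apply: contraTneq oh => ->; rewrite ltnn.
by rewrite wedge_evec_mono // wsign1_setU1 // setUCA.
Qed.

Lemma wedge_mono_setD A X : A \subset X ->
  wedge (mono F A) (mono F (X :\: A)) = wsign F A (X :\: A) *: mono F X.
Proof.
by move=> AX; rewrite wedge_mono /wmono disjoint_setD setUDK.
Qed.

End Wedge.

Section SlowShift.
Variables (F : fieldType) (d : nat).
Local Notation ext := (ext F d).
Implicit Types (m v x y : ext) (R T X : {set 'I_d}) (i j : 'I_d).

Fact shift_x_is_linear j : linear (shift_x j : ext -> ext).
Proof. by move=> a u v; apply/ffunP => X; rewrite !ffunE; case: ifP; rewrite ?scaler0 ?addr0. Qed.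

HB.instance Definition _ j :=
  GRing.isLinear.Build F ext ext *:%R (shift_x j : ext -> ext) (shift_x_is_linear j).

Fact shift_y_is_linear j : linear (shift_y j : ext -> ext).
Proof.
move=> a u v; apply/ffunP => X; rewrite !ffunE; case: ifP; rewrite ?scaler0 ?addr0 //.
by move=> _; rewrite mulrDr; congr (_ + _); exact: mulrCA.
Qed.

HB.instance Definition _ j :=
  GRing.isLinear.Build F ext ext *:%R (shift_y j : ext -> ext) (shift_y_is_linear j).

Lemma shift_x_mono j T : shift_x j (mono F T) = if j \in T then 0 else mono F T.
Proof.
apply/ffunP => X; rewrite !ffunE; case: ifP => jX; case: ifP => jT; rewrite ?ffunE //.
all: by case: eqP => // XT; rewrite XT jT in jX.
Qed.

Lemma shift_y_mono j T : shift_y j (mono F T) =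
  if j \in T then wsign F [set j] (T :\ j) *: mono F (T :\ j) else 0.
Proof.
apply/ffunP => X; rewrite !ffunE; case: ifP => jX; case: ifP => jT; rewrite ?ffunE //.
- by case: eqP => [XT|_]; [rewrite XT !inE eqxx in jX|rewrite scaler0].
- have -> : (j |: X == T) = (X == T :\ j).
    by apply/eqP/eqP => [<-|->]; [rewrite setU1K ?jX|rewrite setD1K].
  by case: eqP => [->|_]; rewrite ?mulr0 ?scaler0.
- by case: eqP => [jXT|_]; [rewrite -jXT setU11 in jT|rewrite mulr0].
Qed.

Lemma shift_y_monoU1 j (o : 'I_d) R : (o < j)%N -> o \notin R -> j \in R ->
  shift_y j (mono F (o |: R)) = - wsign F [set j] (R :\ j) *: mono F (o |: (R :\ j)).
Proof.
move=> oj oR jR; have oRj : o \notin R :\ j by rewrite !inE (negbTE oR) andbF.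
have oRjE : (o |: R) :\ j = o |: (R :\ j).
  apply/setP => t; rewrite !inE; case: (eqVneq t o) => //= ->.
  by rewrite andbT; apply: contraTneq oj => ->; rewrite ltnn.
by rewrite shift_y_mono setU1r // oRjE wsign1_setU1.
Qed.

Lemma shift_decomp j m : shift_x j m + wedge (evec F j) (shift_y j m) = m.
Proof.
apply/ffunP => X; rewrite ffunE [shift_x j m X]ffunE wedge_evecE.
case: ifP => jX; last by rewrite addr0.
by rewrite add0r ffunE !inE eqxx /= (setD1K jX); apply: wsignK.
Qed.

Lemma shift_x_shift_y j m : shift_x j (shift_y j m) = shift_y j m.
Proof. by apply/ffunP => X; rewrite !ffunE; case: (j \in X). Qed.

Lemma shift_x_wedge_evec i j v : i != j -> shift_x j v = v ->
  shift_x j (wedge (evec F i) v) = wedge (evec F i) v.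
Proof.
move=> ij vj; apply/ffunP => X; rewrite ffunE; case: ifP => // jX.
rewrite wedge_evecE; case: ifP => // iX.
by rewrite -vj ffunE !inE jX eq_sym ij mulr0.
Qed.

Lemma shift_xy_unique j x y : shift_x j x = x -> shift_x j y = y ->
  shift_x j (x + wedge (evec F j) y) = x /\ shift_y j (x + wedge (evec F j) y) = y.
Proof.
move=> xj yj; split; apply/ffunP => X; rewrite !ffunE.
  rewrite wedge_evecE; case jX: (j \in X); last by rewrite addr0.
  by rewrite -xj ffunE jX.
case: ifP => jX; first by rewrite -yj ffunE jX.
rewrite wedge_evecE setU11 setU1K ?jX // -{1}xj ffunE setU11 add0r.
exact: wsignK.
Qed.

Section ShiftFixed.
Variables (L : {vspace ext}) (i j : 'I_d).
Hypothesis fixL : shift_fixed j i L.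

Lemma slow_shift_mem m : m \in L -> m != 0 -> slow_shift j i m \in L.
Proof.
move=> mL m0; apply/fixL; exists [:: m]; split; last exact: memv_span1.
by move=> u; rewrite inE => /eqP->; rewrite mL m0.
Qed.

Lemma shift_subst_mem m : m \in L -> shift_x j m + wedge (evec F i) (shift_y j m) \in L.
Proof.
move=> mL; set z := _ + _; have [->|z0] := eqVneq z 0; first exact: mem0v.
have m0 : m != 0 by apply: contraNneq z0 => m0; rewrite /z m0 !linear0 addr0.
by have := slow_shift_mem mL m0; rewrite /slow_shift /= -/z z0.
Qed.

Lemma shift_x_mem m : i != j -> m \in L -> shift_x j m \in L.
Proof.
move=> ij mL; set y := shift_y j m.
have yj : shift_x j y = y := shift_x_shift_y j m.
have eiyj : shift_x j (- wedge (evec F i) y) = - wedge (evec F i) y.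
  by rewrite linearN /= shift_x_wedge_evec.
pose m' := - wedge (evec F i) y + wedge (evec F j) y.
have m'L : m' \in L.
  rewrite (_ : m' = m - (shift_x j m + wedge (evec F i) y)).
    by rewrite memvB ?shift_subst_mem.
  by rewrite /m' -{1}(shift_decomp j m) -/y opprD addrACA subrr add0r addrC.
have [x'E y'E] := shift_xy_unique eiyj yj; rewrite -/m' in x'E y'E.
(* The slow shift of [m'] is [e_j /\ y], because its [e_i]-part cancels. *)
have ejyL : wedge (evec F j) y \in L.
  have [m'0|m'n0] := eqVneq m' 0.
    move: x'E; rewrite m'0 linear0 => /eqP; rewrite eq_sym oppr_eq0 => /eqP eiy0.
    by move: m'0; rewrite /m' eiy0 oppr0 add0r => ->; rewrite mem0v.
  by have := slow_shift_mem m'L m'n0; rewrite /slow_shift x'E y'E addNr eqxx.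
by rewrite -(addrK (wedge (evec F j) y) (shift_x j m)) shift_decomp memvB.
Qed.

End ShiftFixed.

End SlowShift.

Section Decomposition.
Variables (F : fieldType) (n k : nat).
Local Notation ext := (ext F n.+2).
Local Notation o0 := (0 : 'I_n.+2).
Local Notation o1 := (1 : 'I_n.+2).
Local Notation e0 := (evec F o0).
Local Notation e1 := (evec F o1).
Implicit Types (a c : F) (p q r : F * F) (m v : ext) (R S X Y Z : {set 'I_n.+2}) (i j : 'I_n.+2).

Lemma neq_o01 : o0 != o1.
Proof. by rewrite -(inj_eq val_inj). Qed.

Lemma gt1_o01 (t : 'I_n.+2) : (1 < t)%N = (t != o0) && (t != o1).
Proof. by rewrite -!(inj_eq val_inj); case: t => [[|[|t]] ?]. Qed.

Lemma gt1_notin01 S (t : 'I_n.+2) : o0 \notin S -> o1 \notin S -> t \in S -> (1 < t)%N.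
Proof.
by move=> S0 S1 tS; rewrite gt1_o01; apply/andP; split; [move: S0|move: S1];
  apply: contraNneq => <-.
Qed.

Definition base := [set S : {set 'I_n.+2} | (#|S| == k.-1) && [disjoint S & [set o0; o1]]].

Lemma in_base S : (S \in base) = [&& o0 \notin S, o1 \notin S & #|S| == k.-1].
Proof.
by rewrite inE andbC disjoint_sym disjoints_subset subUset !sub1set !inE andbA.
Qed.

Definition pair S X := (X == o0 |: S) || (X == o1 |: S).

Definition both01 X := (o0 \in X) && (o1 \in X).

Definition pvec p S : ext := p.1 *: mono F (o0 |: S) + p.2 *: mono F (o1 |: S).

Definition wvec p : ext := p.1 *: e0 + p.2 *: e1.

Lemma wedge_wvec_mono p S : o0 \notin S -> o1 \notin S -> wedge (wvec p) (mono F S) = pvec p S.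
Proof.
move=> S0 S1; rewrite wedgeDl !wedgeZl !wedge_evec_mono // !wsign1_gt ?scale1r //.
  by move=> t tS; apply: gt1_notin01 tS.
by move=> t tS; apply: ltnW (gt1_notin01 S0 S1 tS).
Qed.

Lemma pvecE p S X :
  pvec p S X = (p.1 * (X == o0 |: S)%:R + p.2 * (X == o1 |: S)%:R : F).
Proof. by rewrite !ffunE. Qed.

Lemma pvecZ c p S : pvec (c * p.1, c * p.2) S = c *: pvec p S.
Proof. by rewrite /pvec scalerDr !scalerA. Qed.

Lemma pvec_comb a c p q S :
  a *: pvec p S + c *: pvec q S = pvec (a * p.1 + c * q.1, a * p.2 + c * q.2) S.
Proof. by rewrite /pvec !scalerDr !scalerA !scalerDl addrACA. Qed.

Lemma pvec_proj m S : o0 \notin S -> pvec (m (o0 |: S), m (o1 |: S)) S = projP (pair S) m.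
Proof.
move=> S0; apply/ffunP => X; rewrite projPE pvecE /pair.
have o01S : (o0 |: S == o1 |: S) = false.
  apply/negbTE; apply: contraNneq S0 => /setP/(_ o0).
  by rewrite !inE eqxx (negbTE neq_o01) /= => <-.
case: (eqVneq X (o0 |: S)) => [->|X0]; first by rewrite o01S /= mulr1 mulr0 addr0.
case: (eqVneq X (o1 |: S)) => [->|X1] /=; first by rewrite mulr0 mulr1 add0r.
by rewrite !mulr0 addr0.
Qed.

Lemma shift_x_pvec j p S : j \in S -> shift_x j (pvec p S) = 0.
Proof. by move=> jS; rewrite linearD !linearZ /= !shift_x_mono !setU1r // !scaler0 addr0. Qed.

Lemma shift_y_pvec j p S : (1 < j)%N -> o0 \notin S -> o1 \notin S -> j \in S ->
  shift_y j (pvec p S) = - wsign F [set j] (S :\ j) *: pvec p (S :\ j).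
Proof.
move=> j1 S0 S1 jS; rewrite linearD !linearZ /= !shift_y_monoU1 // ?(ltnW j1) //.
by rewrite /pvec scalerDr !scalerA !(mulrC (- _)).
Qed.

Lemma wedge_evec_pvec i p R : (1 < i)%N -> o0 \notin R -> o1 \notin R -> i \notin R ->
  wedge (evec F i) (pvec p R) = - wsign F [set i] R *: pvec p (i |: R).
Proof.
move=> i1 R0 R1 iR; rewrite linearD !linearZ /= !wedge_evec_monoU1 // ?(ltnW i1) //.
by rewrite /pvec scalerDr !scalerA !(mulrC (- _)).
Qed.

Lemma wvecE p X :
  wvec p X = (p.1 * (X == [set o0])%:R + p.2 * (X == [set o1])%:R : F).
Proof. by rewrite !ffunE. Qed.

Lemma wvec_o0 p : wvec p [set o0] = p.1.
Proof. by rewrite wvecE eqxx (inj_eq set1_inj) (negbTE neq_o01) mulr1 mulr0 addr0. Qed.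

Lemma wvec_o1 p : wvec p [set o1] = p.2.
Proof. by rewrite wvecE eqxx (inj_eq set1_inj) eq_sym (negbTE neq_o01) mulr1 mulr0 add0r. Qed.

Lemma wvec_free p q : p.1 * q.2 - q.1 * p.2 != 0 -> free [:: wvec p; wvec q].
Proof.
move=> D0; rewrite free_cons seq1_free span_seq1; apply/andP; split.
  apply: contra D0 => /vlineP[t pE].
  have p1E : p.1 = t * q.1 by rewrite -wvec_o0 pE ffunE wvec_o0.
  have p2E : p.2 = t * q.2 by rewrite -wvec_o1 pE ffunE wvec_o1.
  by rewrite p1E p2E mulrCA mulrA subrr.
apply: contra D0 => /eqP q0.
by rewrite -(wvec_o0 q) -(wvec_o1 q) q0 !ffunE mulr0 mul0r subrr.
Qed.

Lemma wvec_mem p : wvec p \in <<[:: e0; e1]>>%VS.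
Proof. by rewrite memvD // memvZ // memv_span // !inE eqxx ?orbT. Qed.

(* Canonical representatives of the points [a : b] of the projective line. *)
Definition normal p := (p == (0, 1)) || (p.1 == 1).

Definition normalize a c : F * F := if a == 0 then (0, 1) else (1, c / a).

Lemma normalize_normal a c : normal (normalize a c).
Proof. by rewrite /normalize /normal; case: ifP; rewrite ?eqxx ?orbT. Qed.

Lemma normalizeK a c : exists s, (a, c) = (s * (normalize a c).1, s * (normalize a c).2).
Proof.
rewrite /normalize; case: eqP => [->|/eqP a0]; first by exists c; rewrite mulr0 mulr1.
by exists a; rewrite mulr1 mulrC divfK.
Qed.

Lemma normal_det p q : normal p -> normal q -> p != q -> p.1 * q.2 - q.1 * p.2 != 0.
Proof.
case: p q => [a b] [a' b']; rewrite /normal !xpair_eqE /=.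
case/orP=> [/andP[/eqP-> /eqP->]|/eqP->]; case/orP=> [/andP[/eqP-> /eqP->]|/eqP->] //=.
- by rewrite !eqxx.
- by rewrite mul0r mul1r sub0r oppr_eq0 oner_eq0.
- by rewrite mulr1 mul0r subr0 oner_eq0.
- by rewrite eqxx !mul1r subr_eq0 eq_sym.
Qed.

Lemma wvec_neq0 p : normal p -> wvec p != 0.
Proof.
case/orP=> [/eqP->|/eqP p1]; apply: contra_neq (oner_neq0 F) => w0.
  by move: (wvec_o1 (0, 1)); rewrite w0 ffunE => ->.
by move: (wvec_o0 p); rewrite w0 ffunE p1 => ->.
Qed.

Variable L : {vspace ext}.
Hypothesis L_Lam : (L <= Lam F n.+2 k)%VS.
Hypothesis L_ann : forall x, x \in L -> wedge (wedge e0 e1) x = 0.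
Hypothesis L_shift : forall i j : 'I_n.+2, (2 <= i)%N -> (i < j)%N -> shift_fixed j i L.
Local Notation E12 := (wedge_sp (wedge e0 e1) (Lam F n.+2 (k - 2))).
Hypothesis E12_L : (E12 <= L)%VS.

Lemma wedge_e01 : wedge e0 e1 = mono F [set o0; o1].
Proof.
rewrite wedge_evec_mono ?inE 1?eq_sym ?neq_o01 // wsign1_gt ?scale1r //.
by move=> t; rewrite inE => /eqP->.
Qed.

Lemma L_card m X : m \in L -> #|X| != k -> m X = 0.
Proof. by move=> /(subvP L_Lam) /span_monosP mL Xk; apply: mL; rewrite inE. Qed.

Lemma L_out01 m X : m \in L -> o0 \notin X -> o1 \notin X -> m X = 0.
Proof.
move=> mL X0 X1; have /(congr1 (fun v : ext => v ([set o0; o1] :|: X))) := L_ann mL.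
rewrite wedge_e01 wedge_monoE subsetUl ffunE setDUl setDv set0U.
rewrite (setDidPl _); last by rewrite disjoint_sym disjoints_subset subUset !sub1set !inE X0.
by move/eqP; rewrite mulf_eq0 (negbTE (wsign_neq0 _ _ _)) => /eqP.
Qed.

Lemma mono_E12 Z : o0 \in Z -> o1 \in Z -> #|Z| = k -> mono F Z \in E12.
Proof.
move=> Z0 Z1 Zk; have sub01 : [set o0; o1] \subset Z by rewrite subUset !sub1set Z0 Z1.
have RL : mono F (Z :\: [set o0; o1]) \in Lam F n.+2 (k - 2).
  by apply: mem_monos; rewrite inE cardsD (setIidPr sub01) cards2 neq_o01 Zk.
have := memvZ (wsign F [set o0; o1] (Z :\: [set o0; o1]))^-1 (memv_wedge_sp (wedge e0 e1) RL).
by rewrite wedge_e01 wedge_mono_setD // scalerA mulVf ?wsign_neq0 // scale1r.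
Qed.

Lemma mem_E12 v : (forall X, v X != 0 -> [&& o0 \in X, o1 \in X & #|X| == k]) -> v \in E12.
Proof.
move=> vE; rewrite [v]ext_monoE; apply: memv_suml => X _.
have [->|/vE/and3P[X0 X1 /eqP Xk]] := eqVneq (v X) 0; first by rewrite scale0r mem0v.
exact/memvZ/mono_E12.
Qed.

Lemma projP_in_mem j (b : bool) m :
  (2 < j)%N -> m \in L -> projP [pred X : {set 'I_n.+2} | (j \in X) == b] m \in L.
Proof.
move=> j2 mL; have two : (2 < n.+2)%N := ltn_trans j2 (ltn_ord j).
have two_j : Ordinal two != j by rewrite -(inj_eq val_inj) /= neq_ltn j2.
have xL := shift_x_mem (L_shift (i := Ordinal two) (leqnn 2) j2) two_j mL.
have xE : shift_x j m = projP [pred X : {set 'I_n.+2} | (j \in X) == false] m.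
  by apply/ffunP => X; rewrite projPE ffunE /=; case: (j \in X).
case: b; last by rewrite -xE.
rewrite (_ : projP _ m = m - shift_x j m) ?memvB //.
by apply/ffunP => X; rewrite projPE !ffunE /=; case: (j \in X); rewrite ?subr0 ?subrr.
Qed.

(* Indices above 2 are separated by shifting them to 2 ([projP_in_mem]); index 2
   itself is then recovered from the cardinality ([agree_eq]). *)
Definition agree S X :=
  all (fun t : 'I_n.+2 => (t \in X) == (t \in S)) [seq t <- enum 'I_n.+2 | (2 < val t)%N].

Lemma agreeP S X :
  reflect (forall t : 'I_n.+2, (2 < t)%N -> (t \in X) = (t \in S)) (agree S X).
Proof.
apply: (iffP allP) => [XS t t2|XS t]; first by apply/eqP/XS; rewrite mem_filter t2 mem_enum.
by rewrite mem_filter => /andP[t2 _]; apply/eqP/XS.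
Qed.

Lemma projP_agree_mem S m : m \in L -> projP (agree S) m \in L.
Proof.
move=> mL; rewrite /agree.
elim: [seq t <- _ | _] (filter_all (fun t : 'I_n.+2 => 2 < val t)%N (enum 'I_n.+2))
  => [|t J IH] /=.
  by move=> _; rewrite (_ : projP _ m = m) //; apply/ffunP => X; rewrite projPE.
case/andP => t2 /IH JL.
by rewrite -(projP_comp [pred X : {set 'I_n.+2} | (t \in X) == (t \in S)]) projP_in_mem.
Qed.

Lemma agree_eq X Y : o0 \notin X -> o1 \notin X -> o0 \notin Y -> o1 \notin Y ->
  agree Y X -> #|X| = #|Y| -> X = Y.
Proof.
move=> X0 X1 Y0 Y1 /agreeP XY cXY.
have at2 Z t : o0 \notin Z -> o1 \notin Z -> t \in Z -> ~~ (2 < t)%N -> val t = 2.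
  move=> Z0 Z1 tZ; rewrite -leqNgt => t2; apply/eqP.
  by rewrite eqn_leq t2 (gt1_notin01 Z0 Z1 tZ).
apply/eqP; rewrite eqEcard cXY leqnn andbT; apply/subsetP => t tX; apply/negPn/negP => tY.
have t2 : val t = 2 by apply: (at2 _ _ X0 X1 tX); apply: contra tY => /XY <-.
have /subsetPn[t' t'Y t'X] : ~~ (Y \subset X).
  by apply: contra tY => YX; have /eqP -> : Y == X by rewrite eqEcard YX cXY leqnn.
have t'2 : val t' = 2 by apply: (at2 _ _ Y0 Y1 t'Y); apply: contra t'X => /XY ->.
by move: tY; rewrite (val_inj (etrans t2 (esym t'2))) t'Y.
Qed.

Lemma pairP S X : S \in base -> pair S X =
  [&& o0 \in X, o1 \notin X & S == X :\ o0] || [&& o1 \in X, o0 \notin X & S == X :\ o1].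
Proof.
rewrite in_base => /and3P[S0 S1 _]; rewrite /pair !eq_setU1 //; congr orb.
all: case: (boolP (_ \in X)) => //= oX; case: eqP => [SE|_]; rewrite ?andbF // andbT.
- by move: S1; rewrite SE !inE eq_sym (negbTE neq_o01).
- by move: S0; rewrite SE !inE (negbTE neq_o01).
Qed.

Lemma agree_pair S X : S \in base -> agree S X -> #|X| = k ->
  (o0 \in X) != (o1 \in X) -> pair S X.
Proof.
move=> Sb; have := Sb; rewrite in_base => /and3P[S0 S1 /eqP cS] /agreeP SX cX.
rewrite pairP //.
have SE o : o \in X -> o0 \notin X :\ o -> o1 \notin X :\ o -> ~~ (2 < o)%N -> S == X :\ o.
  move=> oX Xo0 Xo1 o2; apply/eqP/esym/agree_eq => //; last first.
    by rewrite cS -cX (cardsD1 o X) oX.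
  apply/agreeP => t t2; rewrite in_setD1 SX // andb_idl // => _.
  by apply: contraNneq o2 => <-.
case: (boolP (o0 \in X)) => X0; case: (boolP (o1 \in X)) => X1 //= _.
  by rewrite SE // !inE ?eqxx ?(negbTE X1) ?andbF.
by rewrite SE // !inE ?eqxx ?(negbTE X0) ?andbF.
Qed.

Lemma pair_agree S X : S \in base -> pair S X -> agree S X && ((o0 \in X) != (o1 \in X)).
Proof.
move=> Sb; rewrite pairP // => /orP[]/and3P[oX /negbTE o'X /eqP->]; rewrite oX o'X andbT.
all: apply/agreeP => t t2; rewrite in_setD1 andb_idl // => _.
all: by apply: contraTneq t2 => ->.
Qed.

Lemma projP_both_E12 m : m \in L -> projP both01 m \in E12.
Proof.
move=> mL; apply: mem_E12 => X; rewrite projPE /both01.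
case: ifP => [/andP[-> ->]|_ mX]; last by rewrite eqxx in mX.
by move=> mX; apply: contraTT mX => /(L_card mL)->; rewrite eqxx.
Qed.

Lemma pair_proj_mem m S : m \in L -> S \in base -> projP (pair S) m \in L.
Proof.
move=> mL Sb; have m1L := projP_agree_mem S mL; set m1 := projP (agree S) m in m1L *.
suff -> : projP (pair S) m = m1 - projP both01 m1.
  by rewrite memvB ?(subvP E12_L _ (projP_both_E12 m1L)).
apply/ffunP => X; rewrite !ffunE /both01 /=.
case pSX: (pair S X).
  case/andP: (pair_agree Sb pSX) => -> /negbTE.
  by case: (o0 \in X); case: (o1 \in X) => //= _; rewrite subr0.
case aSX: (agree S X); last by rewrite if_same subr0.
case: ifP => [_|nboth]; first by rewrite subrr.
have [cX|/(L_card mL)->] := eqVneq #|X| k; last by rewrite subr0.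
case X0: (o0 \in X); case X1: (o1 \in X); rewrite ?(L_out01 mL (negbT X0) (negbT X1)) ?subr0 //.
all: by rewrite ?X0 ?X1 in nboth; rewrite agree_pair ?X0 ?X1 in pSX.
Qed.

Lemma L_decomp b : b \in L ->
  b = projP both01 b + \sum_(S in base) projP (pair S) b.
Proof.
move=> bL; apply/ffunP => X; rewrite ffunE sum_ffunE projPE /both01.
under eq_bigr => S _ do rewrite projPE.
have [->|bX] := eqVneq (b X) 0; first by rewrite if_same big1 ?addr0 // => S _; rewrite if_same.
have cX : #|X| = k by apply/eqP; apply: contraNT bX => /(L_card bL)->.
case X0: (o0 \in X); case X1: (o1 \in X) => /=.
- by rewrite big1 ?addr0 // => S Sb; rewrite pairP // X0 X1.
- have XD : X :\ o0 \in base.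
    by rewrite in_base !inE eqxx X1 andbF /= -cX (cardsD1 o0 X) X0 add1n.
  have pX S : S \in base -> pair S X = (S == X :\ o0).
    by move=> Sb; rewrite pairP // X0 X1 /= orbF.
  rewrite add0r (bigD1 (X :\ o0)) //= pX // eqxx big1 ?addr0 //.
  by move=> S /andP[Sb SX]; rewrite pX // (negbTE SX).
- have XD : X :\ o1 \in base.
    by rewrite in_base !inE eqxx X0 andbF /= -cX (cardsD1 o1 X) X1 add1n.
  have pX S : S \in base -> pair S X = (S == X :\ o1).
    by move=> Sb; rewrite pairP // X0 X1.
  rewrite add0r (bigD1 (X :\ o1)) //= pX // eqxx big1 ?addr0 //.
  by move=> S /andP[Sb SX]; rewrite pX // (negbTE SX).
- by rewrite (L_out01 bL (negbT X0) (negbT X1)) eqxx in bX.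
Qed.

Definition fam p := [set S in base | pvec p S \in L].

(* N_{j->i} maps [pvec p S] to a nonzero multiple of [pvec p (S - j + i)]. *)
Lemma fam_shifted p : shifted (fam p).
Proof.
split=> S; rewrite inE in_base => /andP[/and3P[S0 S1 cS] pSL].
  by move=> h; apply: gt1_notin01.
move=> i j i1 ij jS iS; have j1 : (1 < j)%N := ltn_trans i1 ij.
have i0 : i \notin S :\ j by rewrite !inE (negbTE iS) andbF.
have Sj0 : o0 \notin S :\ j by rewrite !inE (negbTE S0) andbF.
have Sj1 : o1 \notin S :\ j by rewrite !inE (negbTE S1) andbF.
have := shift_subst_mem (L_shift i1 ij) pSL.
rewrite shift_x_pvec // add0r shift_y_pvec // linearZ /= wedge_evec_pvec // scalerA.
move=> /(memvZ (wsign F [set j] (S :\ j) * wsign F [set i] (S :\ j))^-1).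
rewrite mulrNN scalerA mulVf ?mulf_neq0 ?wsign_neq0 // scale1r => pS'L.
rewrite inE in_base setUC pS'L andbT !in_setU1 !negb_or Sj0 Sj1 !andbT.
rewrite cardsU1 i0 add1n -(eqP cS) (cardsD1 j S) jS eqxx andbT.
by apply/andP; split; apply: contraTneq i1 => <-.
Qed.

Lemma fam_det p q r S : p.1 * q.2 - q.1 * p.2 != 0 ->
  S \in fam p -> S \in fam q -> S \in fam r.
Proof.
set D := _ - _ => D0; rewrite !inE => /andP[-> pL] /andP[_ qL] /=.
have -> : r = ((r.1 * q.2 - q.1 * r.2) / D * p.1 + (p.1 * r.2 - r.1 * p.2) / D * q.1,
               (r.1 * q.2 - q.1 * r.2) / D * p.2 + (p.1 * r.2 - r.1 * p.2) / D * q.2).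
  by case: r => r1 r2 /=; rewrite /D; congr (_, _); field.
by rewrite -pvec_comb memvD ?memvZ.
Qed.

Definition fam01 := fam (1, 0) :&: fam (0, 1).

Lemma fam01_sub p : fam01 \subset fam p.
Proof.
apply/subsetP => S /setIP[S10 S01]; apply: (fam_det p _ S10 S01).
by rewrite /= mulr1 mulr0 subr0 oner_eq0.
Qed.

Lemma fam_normalI p q : normal p -> normal q -> p != q -> fam p :&: fam q = fam01.
Proof.
move=> np nq pq; apply/eqP; rewrite eqEsubset [fam01 \subset _]subsetI !fam01_sub !andbT.
apply/subsetP => S /setIP[Sp Sq]; have D := normal_det np nq pq.
by rewrite /fam01 in_setI (fam_det (1, 0) D Sp Sq) (fam_det (0, 1) D Sp Sq).
Qed.

Definition Kspace p := <<monos F (fam p)>>%VS.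

Lemma Kspace_base p : (Kspace p <= <<monos F base>>)%VS.
Proof. by apply: span_monosS; apply/subsetP => S; rewrite inE => /andP[]. Qed.

Lemma wedge_sp_Kspace p : (wedge_sp (wvec p) (Kspace p) <= L)%VS.
Proof.
rewrite wedge_sp_span; apply/span_subvP => _ /mapP[_ /mapP[S + ->] ->].
rewrite mem_enum inE => /andP[]; rewrite in_base => /and3P[S0 S1 _].
by rewrite wedge_wvec_mono.
Qed.

Lemma pvec_mem_Kspace a c S : S \in base -> pvec (a, c) S \in L ->
  pvec (a, c) S \in wedge_sp (wvec (normalize a c)) (Kspace (normalize a c)).
Proof.
move=> Sb pL; have [s sE] := normalizeK a c; set p := normalize a c in sE *.
rewrite sE pvecZ; have [->|s0] := eqVneq s 0; first by rewrite scale0r mem0v.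
have Sp : S \in fam p by rewrite inE Sb -(scalerK s0 (pvec p S)) -pvecZ -sE memvZ.
apply: memvZ; move: Sb; rewrite in_base => /and3P[S0 S1 _]; rewrite -wedge_wvec_mono //.
exact/memv_wedge_sp/mem_monos.
Qed.

Definition cands : seq (F * F) :=
  [seq normalize (b (o0 |: R)) (b (o1 |: R))
     | b : ext <- vbasis L, R : {set 'I_n.+2} <- enum base].

(* (1, 0) and (0, 1) are always included, so that the intersection of all the
   K's equals each pairwise intersection. *)
Definition dirs : seq (F * F) :=
  (1, 0) :: (0, 1) :: [seq p <- undup cands | p \notin [:: (1, 0); (0, 1)]].

Lemma dirs_normal p : p \in dirs -> normal p.
Proof.
rewrite !inE => /or3P[/eqP->|/eqP->|]; rewrite /normal ?eqxx ?orbT //.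
by rewrite mem_filter mem_undup => /andP[_ /allpairsP[[b R] [_ _ ->]]]; apply: normalize_normal.
Qed.

Lemma dirs_uniq : uniq dirs.
Proof.
have n10 : (((1 : F), (0 : F)) == (0, 1)) = false by rewrite xpair_eqE oner_eq0.
have n01 : (((0 : F), (1 : F)) == (1, 0)) = false by rewrite eq_sym n10.
by rewrite /= !inE !mem_filter !inE !eqxx n10 n01 /= filter_uniq ?undup_uniq.
Qed.

Lemma cands_dirs p : p \in cands -> p \in dirs.
Proof.
move=> pc; rewrite !inE mem_filter mem_undup pc andbT !inE.
by case: (p == (1, 0)); case: (p == (0, 1)).
Qed.

Local Notation dir i := (tnth (in_tuple dirs) i).

Lemma L_eq_sum :
  L = (E12 + \sum_(i < size dirs) wedge_sp (wvec (dir i)) (Kspace (dir i)))%VS.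
Proof.
apply/eqP; rewrite eqEsubv subv_add E12_L /=; apply/andP; split; last first.
  by apply/subv_sumP => i _; apply: wedge_sp_Kspace.
rewrite -{1}(span_basis (vbasisP L)); apply/span_subvP => b bb.
have bL := vbasis_mem bb.
rewrite (L_decomp bL); apply: memv_add; first exact: projP_both_E12.
apply: memv_suml => S Sb; have := Sb; rewrite in_base => /and3P[S0 _ _].
rewrite -pvec_proj //; have pL : pvec (b (o0 |: S), b (o1 |: S)) S \in L.
  by rewrite pvec_proj ?pair_proj_mem.
have /tnthP[i iE] : normalize (b (o0 |: S)) (b (o1 |: S)) \in in_tuple dirs.
  by apply: cands_dirs; apply/allpairsP; exists (b, S); rewrite /= mem_enum.
by apply: (subvP (sumv_sup i _ (subvv _))) => //; rewrite -iE; apply: pvec_mem_Kspace.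
Qed.

Lemma Kspace_cap p q : p \in dirs -> q \in dirs -> p != q ->
  (Kspace p :&: Kspace q)%VS = <<monos F fam01>>%VS.
Proof. by move=> /dirs_normal np /dirs_normal nq pq; rewrite span_monosI fam_normalI. Qed.

Lemma bigcap_Kspace :
  (LamAvoid F [set o0; o1] k.-1 :&: \bigcap_(i < size dirs) Kspace (dir i))%VS =
  <<monos F fam01>>%VS.
Proof.
apply/eqP; rewrite eqEsubv; apply/andP; split.
  rewrite -(@Kspace_cap (1, 0) (0, 1)) ?inE ?eqxx ?orbT //; last first.
    by rewrite xpair_eqE oner_eq0.
  apply: subv_trans (capvSr _ _) _; rewrite subv_cap.
  by apply/andP; split; [apply: (bigcapv_inf (@Ordinal (size dirs) 0 isT)) |
                         apply: (bigcapv_inf (@Ordinal (size dirs) 1 isT))].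
rewrite subv_cap; apply/andP; split.
  by apply: span_monosS; apply/subsetP => S; rewrite !inE => /andP[/andP[]].
by apply/subv_bigcapP => i _; apply/span_monosS/fam01_sub.
Qed.

End Decomposition.

Theorem corollary3p16 (F : fieldType) (hchar : (2%:R : F) != 0) (n k : nat)
  (hk : (2 <= k)%N) (L : {vspace ext F n.+2}) :
  let e1 := @evec F _ (0 : 'I_n.+2) in
  let e2 := @evec F _ (1 : 'I_n.+2) in
  let E12 := <<[seq wedge (wedge e1 e2) x | x <- vbasis (Lam F n.+2 (k - 2))]>>%VS in
  let A := @LamAvoid F n.+2 [set (0 : 'I_n.+2); 1] k.-1 in
  (L <= Lam F n.+2 k)%VS ->
  (E12 <= L)%VS ->
  (forall x, x \in L -> wedge (wedge e1 e2) x = 0) ->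
  (forall i j : 'I_n.+2, (2 <= i)%N -> (i < j)%N -> shift_fixed j i L) ->
  exists (m : nat) (w : 'I_m -> ext F n.+2) (K : 'I_m -> {vspace ext F n.+2}),
    [/\ (forall i, w i \in <<[:: e1; e2]>>%VS /\ w i != 0) /\
          (forall i j, i != j -> free [:: w i; w j]),
        (forall i, (K i <= A)%VS),
        L = (E12 + \sum_(i < m) wedge_sp (w i) (K i))%VS,
        (forall i j, i != j -> (K i :&: K j)%VS = (A :&: \bigcap_(h < m) K h)%VS) &
        (forall i, shifted_monomial_basis (K i)) /\
        shifted_monomial_basis (A :&: \bigcap_(h < m) K h)%VS].
Proof.
move=> e1 e2 E12 A L_Lam E12_L L_ann L_shift.
pose p i := tnth (in_tuple (dirs k L)) i.
have p_normal i : normal (p i) by apply/dirs_normal/mem_tnth.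
have p_inj : injective p by apply/tuple_uniqP/dirs_uniq.
have det_p i j : i != j -> (p i).1 * (p j).2 - (p j).1 * (p i).2 != 0.
  by move=> ij; apply: normal_det; rewrite ?(inj_eq p_inj).
have capE i j : i != j ->
    (Kspace k L (p i) :&: Kspace k L (p j))%VS = (A :&: \bigcap_h Kspace k L (p h))%VS.
  by move=> ij; rewrite bigcap_Kspace Kspace_cap ?mem_tnth ?(inj_eq p_inj).
exists (size (dirs k L)), (fun i => wvec n (p i)), (fun i => Kspace k L (p i)); split.
- by split=> [i|i j /det_p/wvec_free//]; rewrite wvec_mem wvec_neq0.
- by move=> i; apply: Kspace_base.
- exact: L_eq_sum.
- exact: capE.
- split=> [i|]; first by exists (fam k L (p i)); split; [exact: basis_monos | exact: fam_shifted].
  rewrite bigcap_Kspace; exists (fam01 k L); split; first exact: basis_monos.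
  by apply: shifted_setI; apply: fam_shifted.
Qed.
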